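(* Assume that $\delta=\delta_1\cdots\delta_m$ is a permutation of length $m$ and $\pi=\pi_1\cdots\pi_n$ is a permutation of length $n$, disjoint from each other, where $\mathrm{des}(\delta) = r$ and $\mathrm{des}(\pi) = s$. Moreover, $\delta_1<\delta_2$ and all of the elements of $\delta$ are larger than the elements of $\pi$. Then \begin{align*} (1)\quad & \sum_{\substack{\alpha \in \mathrm{Sh}_l(\pi,\delta) \\ \mathrm{des}(\alpha) = d}} q^{\mathrm{maj}(\alpha)}= {m-r+s \brack d-r} {n-s+r-1\brack d-s-1} q^{\mathrm{maj}(\delta) + \mathrm{maj}(\pi) + (d - s)(d - r)}, \\ (2)\quad & \sum_{\substack{\alpha \in \mathrm{Sh}_{ls}(\pi,\delta) \\ \mathrm{des}(\alpha) = d}} q^{\mathrm{maj}(\alpha)}= {m-r+s-1 \brack d-r} {n-s+r-1\brack d-s-1} q^{\mathrm{maj}(\delta) + \mathrm{maj}(\pi) + (d - s)(d - r)}, \\ (3)\quad & \sum_{\substack{\alpha \in \mathrm{Sh}_{ll}(\pi,\delta) \\ \mathrm{des}(\alpha) = d}} q^{\mathrm{maj}(\alpha)}= {m-r+s-1 \brack d-r} {n-s+r-1\brack d-s-1} q^{\mathrm{maj}(\delta) + \mathrm{maj}(\pi) + (d- s+1)(d - r)}. \end{align*}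
   Context: A permutation of length $n$ here means a sequence of $n$ distinct integers (not necessarily $1,\dots,n$); two permutations are disjoint if they have no letters in common. For $\alpha=\alpha_1\cdots\alpha_n$, $\mathrm{Des}(\alpha)=\{i: \alpha_i>\alpha_{i+1}\}$, $\mathrm{des}(\alpha)=|\mathrm{Des}(\alpha)|$ and $\mathrm{maj}(\alpha)=\sum_{i\in\mathrm{Des}(\alpha)} i$. The Gaussian polynomial is ${n \brack m}=\frac{(1-q^n)(1-q^{n-1})\cdots (1-q^{n-m+1})}{(1-q^m)(1-q^{m-1})\cdots (1-q)}$. For disjoint permutations $\pi=\pi_1\cdots\pi_n$ and $\delta=\delta_1\cdots\delta_m$, a shuffle of $\pi$ and $\delta$ is a permutation $\alpha=\alpha_1\cdots\alpha_{m+n}$ containing both $\pi$ and $\delta$ as subsequences. $\mathrm{Sh}_l(\pi,\delta)$ is the set of shuffles with $\alpha_1=\delta_1$; $\mathrm{Sh}_{ls}(\pi,\delta)$ is the set of shuffles with $\alpha_1=\delta_1$ and $\alpha_{n+m}=\delta_m$ (the last letter of $\delta$); $\mathrm{Sh}_{ll}(\pi,\delta)$ is the set of shuffles with $\alpha_1=\delta_1$ and $\alpha_2=\delta_2$. *)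

From HB Require Import structures.
From mathcomp Require Import all_boot all_order all_algebra.
Set Implicit Arguments. Unset Strict Implicit. Unset Printing Implicit Defensive.
Import Order.TTheory GRing.Theory Num.Theory.

(* Words ("permutations" in the paper's sense) are sequences of integers. *)

(* Descent set, 1-indexed: i \in Des a  iff  a_i > a_{i+1}. *)
Definition Des (a : seq int) : seq nat :=
  [seq i <- iota 1 (size a).-1 | (nth 0%R a i < nth 0%R a i.-1)%R].
Definition des (a : seq int) : nat := size (Des a).
Definition maj (a : seq int) : nat := sumn (Des a).

(* All shuffles of pi and delta: words of length |pi|+|delta| with distinct
   letters containing pi and delta as subsequences. For disjoint pi, delta
   these are exactly the rearrangements of pi ++ delta containing both as
   subsequences. *)
Definition Sh (pi delta : seq int) : seq (seq int) :=
  [seq a <- permutations (pi ++ delta) | subseq pi a && subseq delta a].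

Definition Sh_l (pi delta : seq int) : seq (seq int) :=
  [seq a <- Sh pi delta | nth 0%R a 0 == nth 0%R delta 0].
Definition Sh_ls (pi delta : seq int) : seq (seq int) :=
  [seq a <- Sh_l pi delta |
     nth 0%R a (size pi + size delta).-1 == nth 0%R delta (size delta).-1].
Definition Sh_ll (pi delta : seq int) : seq (seq int) :=
  [seq a <- Sh_l pi delta | nth 0%R a 1 == nth 0%R delta 1].

Definition RF := {fraction {poly int}}.
Definition qv : RF := tofrac 'X.

(* Gaussian polynomial [n brack k] for naturals n k, by the product formula
   (1-q^n)...(1-q^(n-k+1)) / ((1-q^k)...(1-q)); for k > n a factor 1-q^0 = 0
   appears, so it is 0. *)
Definition gauss (n k : nat) : RF :=
  (\prod_(i < k) ((1 - qv ^+ (n - i)) / (1 - qv ^+ i.+1)))%R.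

Definition gaussZ (n k : int) : RF :=
  match n, k with
  | Posz n', Posz k' => gauss n' k'
  | _, _ => 0%R
  end.

(* A shuffle of [delta] and [pi] is encoded by the boolean word recording which of the two
   words each of its letters comes from.  As every letter of [delta] exceeds every letter of
   [pi], whether appending the next letter of [delta] or [pi] creates a descent depends only
   on the word the current last letter comes from and on the last letters of [delta] and
   [pi].  Removing the last letter thus gives linear recursions for the q-generating functions
   of the shuffles starting with [delta_1] and ending with a letter of [delta] (resp. [pi]);
   the right-hand side of (2) and the difference of those of (1) and (2) satisfy the same
   recursions by the q-Pascal rule.  Identity (3) reduces to (1) for [delta_2 ... delta_m],
   as [delta_1 < delta_2] adds no descent and shifts [maj] by [des]. *)

From mathcomp Require Import all_boot all_order all_algebra.
From mathcomp Require Import zify ring.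
Import Order.TTheory GRing.Theory Num.Theory.
Set Implicit Arguments. Unset Strict Implicit. Unset Printing Implicit Defensive.

Lemma count_rcons (T : Type) (p : pred T) s x : count p (rcons s x) = count p s + p x.
Proof. by rewrite -cats1 count_cat /= addn0. Qed.

Lemma mem_last_neq0 (T : eqType) (x0 : T) (s : seq T) : s != [::] -> last x0 s \in s.
Proof. by case: s => // a s _; exact: (mem_last a s). Qed.

Lemma head_rcons (T : eqType) (x0 : T) (s : seq T) z :
  s != [::] -> head x0 (rcons s z) = head x0 s.
Proof. by case: s. Qed.

Section Interleave.
Variables (T : Type) (x0 : T).

Fixpoint interleave (w : seq bool) (x y : seq T) : seq T :=
  if w is b :: w' then
    if b then head x0 x :: interleave w' (behead x) y
    else head x0 y :: interleave w' x (behead y)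
  else [::].

Lemma size_interleave w x y : size (interleave w x y) = size w.
Proof. by elim: w x y => //= b w IHw x y; case: b; rewrite /= IHw. Qed.

Lemma interleave_rcons_l w x y z :
  count id w = size x -> count negb w = size y ->
  interleave (rcons w true) (rcons x z) y = rcons (interleave w x y) z.
Proof.
elim: w x y => [|[] w IHw] x y /=; first by case: x => // _; case: y.
  by case: x => // a x [wx] wy; rewrite IHw.
by case: y => // c y wx [wy]; rewrite IHw.
Qed.

Lemma interleave_rcons_r w x y z :
  count id w = size x -> count negb w = size y ->
  interleave (rcons w false) x (rcons y z) = rcons (interleave w x y) z.
Proof.
elim: w x y => [|[] w IHw] x y /=; first by case: x => // _; case: y.
  by case: x => // a x [wx] wy; rewrite IHw.
by case: y => // c y wx [wy]; rewrite IHw.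
Qed.

Lemma last_interleave w x y :
  count id w = size x -> count negb w = size y -> w != [::] ->
  last x0 (interleave w x y) = last x0 (if last false w then x else y).
Proof.
case/lastP: w => // w b; rewrite last_rcons !count_rcons => + + _.
case: b => /= wx wy.
  case/lastP: x wx => [|x z]; rewrite /= ?size_rcons => wx; first by lia.
  by rewrite interleave_rcons_l ?last_rcons //; lia.
case/lastP: y wy => [|y z]; rewrite /= ?size_rcons => wy; first by lia.
by rewrite interleave_rcons_r ?last_rcons //; lia.
Qed.

Lemma interleave_nseq_true x y : interleave (nseq (size x) true) x y = x.
Proof. by elim: x => //= a x ->. Qed.

Lemma interleave_filter (P : pred T) s :
  interleave [seq P z | z <- s] (filter P s) (filter (predC P) s) = s.
Proof. by elim: s => //= z s IHs; case: (P z); rewrite /= IHs. Qed.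

Lemma map_interleave (P : pred T) w x y :
  count id w = size x -> count negb w = size y -> all P x -> all (predC P) y ->
  [seq P z | z <- interleave w x y] = w.
Proof.
elim: w x y => [|[] w IHw] x y //=.
  by case: x => // a x [wx] wy /andP[-> Px] Py; rewrite IHw.
by case: y => // c y wx [wy] Px /andP[/negbTE-> Py]; rewrite IHw.
Qed.
End Interleave.

Section InterleaveEq.
Variables (T : eqType) (x0 : T).
Implicit Types (w : seq bool) (x y : seq T).

Lemma perm_interleave w x y : count id w = size x -> count negb w = size y ->
  perm_eq (interleave x0 w x y) (x ++ y).
Proof.
elim: w x y => [|[] w IHw] x y /=; first by case: x => // _; case: y.
  by case: x => // a x [wx] wy; rewrite perm_cons IHw.
case: y => // c y wx [wy].
by rewrite perm_sym (perm_catCA x [:: c] y) perm_cons perm_sym IHw.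
Qed.

Lemma subseq_interleave_l w x y : count id w = size x -> count negb w = size y ->
  subseq x (interleave x0 w x y).
Proof.
elim: w x y => [|[] w IHw] x y /=; first by case: x.
  by case: x => // a x [wx] wy; rewrite eqxx IHw.
case: y => // c y wx [wy]; exact: subseq_trans (IHw _ _ wx wy) (subseq_cons _ _).
Qed.

Lemma subseq_interleave_r w x y : count id w = size x -> count negb w = size y ->
  subseq y (interleave x0 w x y).
Proof.
elim: w x y => [|[] w IHw] x y /=; first by case: x => // _; case: y.
  case: x => // a x [wx] wy; exact: subseq_trans (IHw _ _ wx wy) (subseq_cons _ _).
by case: y => // c y wx [wy]; rewrite eqxx IHw.
Qed.
End InterleaveEq.

Fixpoint bwords (m n : nat) {struct m} : seq (seq bool) :=
  if m is m'.+1 then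
    let fix bwords_m n :=
      if n is n'.+1 then
        [seq rcons w true | w <- bwords m' n] ++ [seq rcons w false | w <- bwords_m n']
      else [:: nseq m true] in
    bwords_m n
  else [:: nseq n false].

Lemma bwords0n n : bwords 0 n = [:: nseq n false]. Proof. by []. Qed.
Lemma bwordsS0 m : bwords m.+1 0 = [:: nseq m.+1 true]. Proof. by []. Qed.
Lemma bwordsSS m n : bwords m.+1 n.+1 =
  [seq rcons w true | w <- bwords m n.+1] ++ [seq rcons w false | w <- bwords m.+1 n].
Proof. by []. Qed.

Lemma count_id_negb w : count id w + count negb w = size w.
Proof. exact: count_predC. Qed.

Lemma count_id_eq0 w : count id w = 0 -> w = nseq (size w) false.
Proof. by elim: w => //= -[] w IHw //= /IHw {1}->. Qed.

Lemma count_negb_eq0 w : count negb w = 0 -> w = nseq (size w) true.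
Proof. by elim: w => //= -[] w IHw //= /IHw {1}->. Qed.

Lemma mem_bwords m n w :
  (w \in bwords m n) = (count id w == m) && (count negb w == n).
Proof.
have rcons_notin u s (b : bool) : (rcons u b \in [seq rcons v (~~ b) | v <- s]) = false.
  by apply/mapP => -[v _ /eqP]; rewrite eqseq_rcons; case: b; rewrite andbF.
have rcons_in u s (b : bool) : (rcons u b \in [seq rcons v b | v <- s]) = (u \in s).
  exact: (mem_map (@rcons_injl _ b)).
elim: m n w => [|m IHm] n w.
  rewrite inE; apply/eqP/andP => [-> | [/eqP w0 /eqP <-]].
    by rewrite !count_nseq mul0n mul1n.
  by rewrite {1}(count_id_eq0 w0) -count_id_negb w0.
elim: n w => [|n IHn] w.
  rewrite inE; apply/eqP/andP => [-> | [/eqP <- /eqP w0]].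
    by rewrite !count_nseq mul0n mul1n.
  by rewrite {1}(count_negb_eq0 w0) -count_id_negb w0 addn0.
rewrite bwordsSS mem_cat; case/lastP: w => [|w b]; first by apply/negbTE/orP => -[] /mapP[[|? ?]].
rewrite !count_rcons.
by case: b; rewrite rcons_in ?IHm ?IHn !addn0 !addn1 !eqSS
  ?(rcons_notin _ _ true) ?(rcons_notin _ _ false) ?orbF.
Qed.

Lemma uniq_bwords m n : uniq (bwords m n).
Proof.
elim: m n => [|m IHm] n //; elim: n => [|n IHn] //.
rewrite bwordsSS cat_uniq !map_inj_uniq ?IHm ?IHn //= ?andbT; try exact: rcons_injl.
by apply/hasP => -[_ /mapP[u _ ->] /mapP[v _ /eqP]]; rewrite eqseq_rcons andbF.
Qed.

Lemma size_mem_bwords m n w : w \in bwords m n -> size w = (m + n)%N.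
Proof. by rewrite mem_bwords -count_id_negb => /andP[/eqP-> /eqP->]. Qed.

Lemma mem_bwords_neq0 m n w : (0 < m + n)%N -> w \in bwords m n -> w != [::].
Proof. by move=> mn_gt0 /size_mem_bwords; rewrite -size_eq0 => ->; rewrite -lt0n. Qed.

Local Open Scope ring_scope.

Lemma qv_neq0 : qv != 0.
Proof. by rewrite /qv tofrac_eq0 polyX_eq0. Qed.

Lemma one_sub_qvX_neq0 i : (0 < i)%N -> 1 - qv ^+ i != 0.
Proof.
move=> i_gt0; rewrite subr_eq0 eq_sym /qv -tofracXn -tofrac1 tofrac_eq.
apply/eqP => /(congr1 (fun p : {poly int} => size p)); rewrite size_polyXn size_poly1.
by case: i i_gt0.
Qed.

Definition qfact (n : nat) : RF := \prod_(i < n) (1 - qv ^+ i.+1).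

Lemma qfact_neq0 n : qfact n != 0.
Proof. by apply/prodf_neq0 => i _; apply: one_sub_qvX_neq0. Qed.

Lemma qfactS n : qfact n.+1 = qfact n * (1 - qv ^+ n.+1).
Proof. by rewrite /qfact big_ord_recr. Qed.

Lemma gauss0 n : gauss n 0 = 1.
Proof. by rewrite /gauss big_ord0. Qed.

Lemma gaussS n k :
  gauss n k.+1 = gauss n k * ((1 - qv ^+ (n - k)) / (1 - qv ^+ k.+1)).
Proof. by rewrite /gauss big_ord_recr. Qed.

Lemma gauss_small n k : (n < k)%N -> gauss n k = 0.
Proof.
elim: k => // k IHk; rewrite ltnS leq_eqVlt gaussS => /predU1P[->|/IHk ->].
  by rewrite subnn expr0 subrr mul0r mulr0.
by rewrite mul0r.
Qed.

Lemma gauss_qfact n k :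
  (k <= n)%N -> gauss n k * (qfact k * qfact (n - k)) = qfact n.
Proof.
elim: k => [|k IHk] le_k_n; first by rewrite gauss0 subn0 /qfact big_ord0 !mul1r.
have nz := one_sub_qvX_neq0 (ltn0Sn k).
rewrite -IHk ?(ltnW le_k_n) // gaussS.
have -> : (n - k = (n - k.+1).+1)%N by lia.
rewrite !qfactS -[in RHS](divfK nz (1 - _)); ring.
Qed.

Lemma gaussnn n : gauss n n = 1.
Proof.
apply: (mulIf (qfact_neq0 n)); rewrite mul1r -[in RHS](gauss_qfact (leqnn n)).
by rewrite subnn /qfact big_ord0 mulr1.
Qed.

Lemma gauss_pascal n k :
  gauss n.+1 k.+1 = gauss n k.+1 + qv ^+ (n - k) * gauss n k.
Proof.
case: (ltngtP k n) => [lt_k_n | lt_n_k | ->]; last first.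
- by rewrite gaussnn gauss_small // subnn expr0 mul1r gaussnn add0r.
- by rewrite !gauss_small ?mulr0 ?addr0 // ltnW.
apply: (mulIf (mulf_neq0 (qfact_neq0 k.+1) (qfact_neq0 (n - k)))).
rewrite -[in LHS](subSS k n) gauss_qfact; last by rewrite ltnS ltnW.
have -> : (gauss n k.+1 + qv ^+ (n - k) * gauss n k) * (qfact k.+1 * qfact (n - k)) =
    gauss n k.+1 * (qfact k.+1 * qfact (n - k.+1)) * (1 - qv ^+ (n - k))
    + qv ^+ (n - k) * (gauss n k * (qfact k * qfact (n - k))) * (1 - qv ^+ k.+1).
  by rewrite (_ : (n - k = (n - k.+1).+1)%N) ?qfactS; [ring | lia].
rewrite !gauss_qfact ?(ltnW lt_k_n) // qfactS.
have -> : qv ^+ n.+1 = qv ^+ (n - k) * qv ^+ k.+1 by rewrite -exprD; congr (_ ^+ _); lia.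
ring.
Qed.

Lemma gaussZ_pascal (N : nat) (k : int) :
  gaussZ N.+1 (k + 1) = gaussZ N (k + 1) + qv ^ (N%:Z - k) * gaussZ N k.
Proof.
case: k => [k | [|k]].
- rewrite (_ : Posz k + 1 = k.+1); last by lia.
  rewrite /= gauss_pascal.
  have [le_k_N | lt_N_k] := leqP k N; first by rewrite subzn // exprnP.
  by rewrite (gauss_small lt_N_k) !mulr0.
- by rewrite /= !gauss0 mulr0 addr0.
- have -> : Negz k.+1 + 1 = Negz k by rewrite !NegzE; lia.
  by rewrite /= mulr0 addr0.
Qed.

Lemma gaussZ_eq0 (N k : int) : (k < 0) || (N < k) -> gaussZ N k = 0.
Proof. by case: N k => // N [] // k /= /gauss_small. Qed.

Definition qterm (N k N' k' e : int) : RF := gaussZ N k * gaussZ N' k' * qv ^ e.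

Lemma qterm_pascal_l (N : nat) k N' k' e :
  qterm N.+1 k N' k' e = qterm N k N' k' e + qterm N (k - 1) N' k' (e + N%:Z - k + 1).
Proof.
rewrite /qterm -{1}(subrK 1 k) gaussZ_pascal subrK.
by rewrite (_ : e + N%:Z - k + 1 = N%:Z - (k - 1) + e) ?expfzDr ?qv_neq0 //; ring.
Qed.

Lemma qterm_pascal_r N k (N' : nat) k' e :
  qterm N k N'.+1 k' e = qterm N k N' k' e + qterm N k N' (k' - 1) (e + N'%:Z - k' + 1).
Proof.
rewrite /qterm -{1}(subrK 1 k') gaussZ_pascal subrK.
by rewrite (_ : e + N'%:Z - k' + 1 = N'%:Z - (k' - 1) + e) ?expfzDr ?qv_neq0 //; ring.
Qed.

Lemma qvX_qterm (i : nat) N k N' k' e :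
  qv ^+ i * qterm N k N' k' e = qterm N k N' k' (e + i%:Z).
Proof. by rewrite /qterm expfzDr ?qv_neq0 // -exprnP; ring. Qed.

(* The right-hand sides of (1) and (2); [form_lp], their difference, is again a product. *)
Definition form_l (m n r s M : nat) (d : int) : RF :=
  qterm (m%:Z - r%:Z + s%:Z) (d - r%:Z) (n%:Z - s%:Z + r%:Z - 1) (d - s%:Z - 1)
        (M%:Z + (d - s%:Z) * (d - r%:Z)).

Definition form_ls (m n r s M : nat) (d : int) : RF :=
  qterm (m%:Z - r%:Z + s%:Z - 1) (d - r%:Z) (n%:Z - s%:Z + r%:Z - 1) (d - s%:Z - 1)
        (M%:Z + (d - s%:Z) * (d - r%:Z)).

Definition form_lp (m n r s M : nat) (d : int) : RF :=
  qterm (m%:Z - r%:Z + s%:Z - 1) (d - r%:Z - 1) (n%:Z - s%:Z + r%:Z - 1) (d - s%:Z - 1)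
        (M%:Z + (d - s%:Z) * (d - r%:Z) + m%:Z + s%:Z - d).

Lemma form_l_split m n r s M d : (r < m)%N ->
  form_l m n r s M d = form_ls m n r s M d + form_lp m n r s M d.
Proof.
move=> lt_r_m; rewrite /form_l (_ : m%:Z - r%:Z + s%:Z = (m - r + s - 1).+1%N); last by lia.
rewrite qterm_pascal_l; congr (_ + _); congr qterm; lia.
Qed.

Lemma form_ls_rcons_asc m n r s M d :
  form_ls m.+1 n r s M d = form_l m n r s M d.
Proof. by rewrite /form_ls; congr qterm; lia. Qed.

Lemma form_ls_rcons_des m n r s M d : (r < m)%N -> (s < n)%N ->
  form_ls m.+1 n r.+1 s (M + m) d =
  qv ^+ (m + n) * form_ls m n r s M (d - 1) + form_lp m n r s M d.
Proof.
move=> lt_r_m lt_s_n.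
rewrite /form_ls (_ : n%:Z - s%:Z + r.+1%:Z - 1 = (n - s + r - 1).+1%N); last by lia.
rewrite qterm_pascal_r qvX_qterm addrC; congr (_ + _); congr qterm; nia.
Qed.

Lemma form_lp_rcons_des m n r s M d : (r < m)%N ->
  form_lp m n.+1 r s.+1 (M + n) d = qv ^+ (m + n) * form_l m n r s M (d - 1).
Proof. by move=> lt_r_m; rewrite /form_lp qvX_qterm; congr qterm; nia. Qed.

Lemma form_lp_rcons_asc m n r s M d : (r < m)%N -> (s < n)%N ->
  form_lp m n.+1 r s M d =
  qv ^+ (m + n) * form_ls m n r s M (d - 1) + form_lp m n r s M d.
Proof.
move=> lt_r_m lt_s_n.
rewrite /form_lp (_ : n.+1%:Z - s%:Z + r%:Z - 1 = (n - s + r - 1).+1%N); last by lia.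
rewrite qterm_pascal_r qvX_qterm addrC; congr (_ + _); congr qterm; nia.
Qed.

Lemma form_lp_single_pi m r M (d : int) : (r < m)%N ->
  form_lp m 1 r 0 M d = if d == r.+1%:Z then qv ^+ (M + m) else 0.
Proof.
move=> lt_r_m; rewrite /form_lp /qterm.
have [-> | ne_d] := eqVneq d r.+1%:Z.
  transitivity (gaussZ (m - r - 1)%N 0 * gaussZ r r * qv ^ (M + m)%N).
    by congr (gaussZ _ _ * gaussZ _ _ * qv ^ _); lia.
  by rewrite /= gauss0 gaussnn !mul1r -exprnP.
have [le_d_r | lt_r_d] := lerP d r%:Z.
  by rewrite [X in X * _ * _]gaussZ_eq0 ?mul0r //; lia.
by rewrite [X in _ * X * _]gaussZ_eq0 ?mulr0 ?mul0r //; lia.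
Qed.

Lemma form_ls_single_delta n s M (d : int) : (s < n)%N ->
  form_ls 1 n 0 s M d = 0.
Proof.
move=> lt_s_n; rewrite /form_ls /qterm.
have [le_d_s | lt_s_d] := lerP d s%:Z.
  by rewrite [X in _ * X * _]gaussZ_eq0 ?mulr0 ?mul0r //; lia.
by rewrite [X in X * _ * _]gaussZ_eq0 ?mul0r //; lia.
Qed.

Section ShuffleStatistics.
Implicit Types (a x y pi delta : seq int) (w : seq bool).

Lemma Des_rcons a z : a != [::] ->
  Des (rcons a z) = Des a ++ (if z < last 0 a then [:: size a] else [::]).
Proof.
move=> a_neq0; rewrite /Des size_rcons /=.
have size_a : size a = (size a).-1.+1 by case: (a) a_neq0.
rewrite {1}size_a -[(size a).-1.+1]addn1 iotaD filter_cat; congr (_ ++ _).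
  apply: eq_in_filter => i; rewrite mem_iota => /andP[i_gt0 i_lt].
  by rewrite !nth_rcons ifT ?ifT //; lia.
rewrite add1n -size_a /= !nth_rcons ltnn eqxx ltn_predL lt0n size_eq0 a_neq0.
by rewrite nth_last.
Qed.

Lemma des_rcons a z : a != [::] -> des (rcons a z) = (des a + (z < last 0 a)%R)%N.
Proof. by move=> a_neq0; rewrite /des Des_rcons // size_cat; case: ifP. Qed.

Lemma maj_rcons a z : a != [::] ->
  maj (rcons a z) = (maj a + (z < last 0 a)%R * size a)%N.
Proof. by move=> a_neq0; rewrite /maj Des_rcons // sumn_cat; case: ifP => _ /=; lia. Qed.

Lemma Des_cons a z : a != [::] ->
  Des (z :: a) = (if head 0 a < z then [:: 1%N] else [::]) ++ map succn (Des a).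
Proof.
move=> a_neq0; rewrite /Des /=.
have -> : size a = (size a).-1.+1 by case: (a) a_neq0.
rewrite /= -[2%N]/(1 + 1)%N iotaDl filter_map nth0.
rewrite (@eq_in_filter _ _ (fun i => a`_i < a`_i.-1)); first by case: ifP.
by move=> [|i] //; rewrite mem_iota.
Qed.

Lemma des_cons a z : a != [::] -> des (z :: a) = ((head 0 a < z)%R + des a)%N.
Proof. by move=> a_neq0; rewrite /des Des_cons // size_cat size_map; case: ifP. Qed.

Lemma maj_cons a z : a != [::] ->
  maj (z :: a) = ((head 0 a < z)%R + maj a + des a)%N.
Proof.
move=> a_neq0; rewrite /maj /des Des_cons // sumn_cat.
have sumn_succ (l : seq nat) : sumn (map succn l) = (sumn l + size l)%N.
  by elim: l => //= i l ->; lia.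
by rewrite sumn_succ; case: ifP => _ /=; lia.
Qed.

Lemma des_lt_size a : a != [::] -> (des a < size a)%N.
Proof.
case: a => // z a _; rewrite /des /Des size_filter ltnS.
by rewrite (leq_trans (count_size _ _)) ?size_iota.
Qed.

(* [d] is an integer so that the shift [d - 1] needs no truncation. *)
Definition qwt (d : int) a : RF := if (des a)%:Z == d then qv ^+ maj a else 0.

Lemma qwt_rcons a z d : a != [::] ->
  qwt d (rcons a z) = if z < last 0 a then qv ^+ size a * qwt (d - 1) a else qwt d a.
Proof.
move=> a_neq0; rewrite /qwt des_rcons // maj_rcons //.
case: (z < last 0 a); last by rewrite /= mul0n !addn0.
rewrite mul1n PoszD [_ == d - 1]eq_sym subr_eq eq_sym.
by case: eqP => _; rewrite ?mulr0 // exprD mulrC.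
Qed.

(* Words with head [true] encode the shuffles starting with [x_1]; [b] tells whether the
   last letter comes from [x]. *)
Definition shuffle_gf (b : bool) x y (d : int) : RF :=
  \sum_(w <- bwords (size x) (size y) | head false w && (last false w == b))
     qwt d (interleave 0 w x y).

(* The shuffles of [shuffle_gf b x y] extended by [z]: a descent at position
   [size x + size y] appears iff [z] is below their last letter, [last x] or [last y]. *)
Definition append_gf (z : int) (b : bool) x y (d : int) : RF :=
  if z < last 0 (if b then x else y)
  then qv ^+ (size x + size y) * shuffle_gf b x y (d - 1)
  else shuffle_gf b x y d.

Lemma qwt_rcons_interleave w x y z d : w \in bwords (size x) (size y) -> w != [::] ->
  qwt d (rcons (interleave 0 w x y) z) =
  if z < last 0 (if last false w then x else y)
  then qv ^+ (size x + size y) * qwt (d - 1) (interleave 0 w x y)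
  else qwt d (interleave 0 w x y).
Proof.
rewrite mem_bwords => /andP[/eqP wx /eqP wy] w_neq0.
rewrite qwt_rcons -?size_eq0 size_interleave ?size_eq0 // last_interleave //.
by rewrite -count_id_negb wx wy.
Qed.

Lemma sum_head_qwt_rcons x y z d : (0 < size x + size y)%N ->
  \sum_(w <- bwords (size x) (size y) | head false w) qwt d (rcons (interleave 0 w x y) z)
  = append_gf z true x y d + append_gf z false x y d.
Proof.
move=> xy_gt0.
have ends_with b : \sum_(w <- bwords (size x) (size y) | head false w && (last false w == b))
    qwt d (rcons (interleave 0 w x y) z) = append_gf z b x y d.
  rewrite /append_gf /shuffle_gf; case: ifP => z_lt;
    rewrite ?mulr_sumr big_seq_cond [RHS]big_seq_cond;
    apply: eq_bigr => w /and3P[w_in _ /eqP w_last];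
    by rewrite qwt_rcons_interleave ?(mem_bwords_neq0 xy_gt0) // w_last z_lt.
rewrite -!ends_with (bigID (fun w => last false w)) /=.
by congr (_ + _); apply: eq_bigl => w; rewrite ?eqb_id ?eqbF_neg.
Qed.

Lemma shuffle_gf_rcons_l x y z d : y != [::] ->
  shuffle_gf true (rcons x z) y d =
  append_gf z true x y d + append_gf z false x y d.
Proof.
move=> y_neq0; have xy_gt0 : (0 < size x + size y)%N by rewrite addn_gt0 orbC lt0n size_eq0 y_neq0.
have [n size_y] : exists n, size y = n.+1 by exists (size y).-1; rewrite prednK // lt0n size_eq0.
rewrite -sum_head_qwt_rcons // /shuffle_gf size_rcons size_y bwordsSS big_cat !big_map -size_y /=.
rewrite [X in _ + X]big_pred0 => [|w]; last by rewrite last_rcons andbF.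
rewrite addr0 big_seq_cond [RHS]big_seq_cond; apply: eq_big => [w | w /andP[w_in _]].
  case: (boolP (w \in _)) => //= w_in.
  by rewrite head_rcons ?last_rcons ?andbT ?(mem_bwords_neq0 xy_gt0).
by move: w_in; rewrite mem_bwords => /andP[/eqP wx /eqP wy]; rewrite interleave_rcons_l.
Qed.

Lemma shuffle_gf_rcons_r x y z d : x != [::] ->
  shuffle_gf false x (rcons y z) d =
  append_gf z true x y d + append_gf z false x y d.
Proof.
move=> x_neq0; have xy_gt0 : (0 < size x + size y)%N by rewrite addn_gt0 lt0n size_eq0 x_neq0.
have [m size_x] : exists m, size x = m.+1 by exists (size x).-1; rewrite prednK // lt0n size_eq0.
rewrite -sum_head_qwt_rcons // /shuffle_gf size_rcons size_x bwordsSS big_cat !big_map -size_x /=.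
rewrite [X in X + _]big_pred0 => [|w]; last by rewrite last_rcons andbF.
rewrite add0r big_seq_cond [RHS]big_seq_cond; apply: eq_big => [w | w /andP[w_in _]].
  case: (boolP (w \in _)) => //= w_in.
  by rewrite head_rcons ?last_rcons ?andbT ?(mem_bwords_neq0 xy_gt0).
by move: w_in; rewrite mem_bwords => /andP[/eqP wx /eqP wy]; rewrite interleave_rcons_r.
Qed.

Lemma shuffle_gf_nil_l b y d : shuffle_gf b [::] y d = 0.
Proof. by rewrite /shuffle_gf bwords0n big_cons big_nil; case: (size y). Qed.

Lemma shuffle_gf_nil_r b x d : x != [::] -> shuffle_gf b x [::] d = if b then qwt d x else 0.
Proof.
case: x => // a x _; rewrite /shuffle_gf bwordsS0 big_cons big_nil addr0.
rewrite -[nseq _ _]/(nseq (size (a :: x)) true) interleave_nseq_true /=.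
by rewrite (_ : last _ _ = true); [case: b | elim: (size x)].
Qed.

Definition ls_closed x y := forall d,
  shuffle_gf true x y d = form_ls (size x) (size y) (des x) (des y) (maj x + maj y) d.
Definition lp_closed x y := forall d,
  shuffle_gf false x y d = form_lp (size x) (size y) (des x) (des y) (maj x + maj y) d.

Lemma ls_closed_single z y : y != [::] -> ls_closed [:: z] y.
Proof.
move=> y_neq0 d; rewrite -[[:: z]]/(rcons [::] z) shuffle_gf_rcons_l //.
rewrite /append_gf !shuffle_gf_nil_l mulr0 !if_same addr0.
by rewrite form_ls_single_delta // des_lt_size.
Qed.

Lemma lp_closed_single x z : x != [::] -> z < last 0 x -> lp_closed x [:: z].
Proof.
move=> x_neq0 z_lt d; rewrite -[[:: z]]/(rcons [::] z) shuffle_gf_rcons_r //.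
rewrite /append_gf z_lt !shuffle_gf_nil_r // mulr0 !if_same addr0 addn0.
rewrite form_lp_single_pi ?des_lt_size // /qwt (_ : maj (rcons [::] z) = 0%N) // addn0.
have [-> | ne_d] := eqVneq d (des x).+1.
  rewrite (_ : (des x).+1%:Z - 1 = des x); last by lia.
  by rewrite eqxx mulrC -exprD.
by rewrite ifF ?mulr0 //; apply/negbTE/eqP => eq_d; move/eqP: ne_d; lia.
Qed.

Lemma ls_closed_rcons x y z : x != [::] -> y != [::] -> last 0 y < z ->
  ls_closed x y -> lp_closed x y -> ls_closed (rcons x z) y.
Proof.
move=> x_neq0 y_neq0 z_gt gf_ls gf_lp d.
have r_lt := des_lt_size x_neq0; have s_lt := des_lt_size y_neq0.
rewrite shuffle_gf_rcons_l // /append_gf (lt_gtF z_gt) gf_lp.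
rewrite size_rcons des_rcons // maj_rcons //; case: ifP => _; rewrite !gf_ls.
  by rewrite addn1 mul1n addnAC form_ls_rcons_des.
by rewrite addn0 mul0n addn0 form_ls_rcons_asc form_l_split.
Qed.

Lemma lp_closed_rcons x y z : x != [::] -> y != [::] -> z < last 0 x ->
  ls_closed x y -> lp_closed x y -> lp_closed x (rcons y z).
Proof.
move=> x_neq0 y_neq0 z_lt gf_ls gf_lp d.
have r_lt := des_lt_size x_neq0; have s_lt := des_lt_size y_neq0.
rewrite shuffle_gf_rcons_r // /append_gf z_lt gf_ls.
rewrite size_rcons des_rcons // maj_rcons //; case: ifP => _; rewrite !gf_lp.
  by rewrite addn1 mul1n addnA form_lp_rcons_des // form_l_split // mulrDr.
by rewrite addn0 mul0n addn0 form_lp_rcons_asc.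
Qed.

Lemma shuffle_gf_closed x y : x != [::] -> y != [::] -> allrel >%R x y ->
  ls_closed x y /\ lp_closed x y.
Proof.
elim/last_ind: y x => // y c IHy x x_neq0 yc_neq0 xyc.
have lp_rcons x' : x' != [::] -> allrel >%R x' (rcons y c) -> lp_closed x' (rcons y c).
  move=> x'_neq0 x'yc; have c_lt : c < last 0 x'.
    by apply: (allrelP x'yc); rewrite ?mem_last_neq0 ?mem_rcons ?mem_head.
  have [-> | y_neq0] := eqVneq y [::]; first exact: lp_closed_single.
  have /andP[x'y _] : allrel >%R x' y && allrel >%R x' [:: c].
    by rewrite -allrel_catr cats1.
  have [gf_ls gf_lp] := IHy x' x'_neq0 y_neq0 x'y.
  exact: lp_closed_rcons.
split; last exact: lp_rcons.
elim/last_ind: x x_neq0 xyc => // x a IHx _ xyc.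
have [-> | x_neq0] := eqVneq x [::]; first exact: ls_closed_single.
have /andP[xyc' _] : allrel >%R x (rcons y c) && allrel >%R [:: a] (rcons y c).
  by rewrite -allrel_catl cats1.
apply: ls_closed_rcons => //; last exact: lp_rcons.
- by apply: (allrelP xyc); rewrite ?mem_last_neq0 ?mem_rcons ?mem_head.
- exact: IHx.
Qed.

Lemma perm_Sh_interleave pi delta :
  uniq delta -> uniq pi -> {in pi, forall z, z \notin delta} ->
  perm_eq (Sh pi delta)
          [seq interleave 0 w delta pi | w <- bwords (size delta) (size pi)].
Proof.
move=> udelta upi disj.
have delta_in : all (mem delta) delta by apply/allP.
have pi_notin : all (predC (mem delta)) pi by apply/allP => z /disj.
apply: uniq_perm.
- by rewrite filter_uniq // permutations_uniq.
- rewrite map_inj_in_uniq ?uniq_bwords // => w1 w2.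
  rewrite !mem_bwords => /andP[/eqP w1x /eqP w1y] /andP[/eqP w2x /eqP w2y] eq_w12.
  rewrite -(map_interleave 0 w1x w1y delta_in pi_notin) eq_w12.
  exact: map_interleave.
move=> a; rewrite mem_filter mem_permutations; apply/idP/mapP.
  case/andP => /andP[pi_a delta_a] perm_a.
  have ua : uniq a.
    by rewrite (perm_uniq perm_a) cat_uniq upi udelta andbT; apply/hasP => -[z z_delta /disj]; rewrite z_delta.
  have filter_delta : [seq z <- a | z \in delta] = delta.
    by move/(subseq_uniqP ua): delta_a.
  have filter_pi : [seq z <- a | z \notin delta] = pi.
    move/(subseq_uniqP ua): pi_a => ->; apply: eq_in_filter => z.
    rewrite (perm_mem perm_a) mem_cat => /orP[z_pi | z_delta]; first by rewrite z_pi disj.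
    by rewrite z_delta; apply/esym/negP => /disj/negP.
  exists [seq z \in delta | z <- a].
    by rewrite mem_bwords !count_map -!size_filter filter_delta filter_pi !eqxx.
  by rewrite -{1}(interleave_filter 0 (mem delta) a) filter_delta filter_pi.
case=> w; rewrite mem_bwords => /andP[/eqP wx /eqP wy] ->.
rewrite subseq_interleave_l // subseq_interleave_r //.
by rewrite perm_sym perm_catC perm_sym perm_interleave.
Qed.

Lemma nth0_interleave w delta pi :
  w \in bwords (size delta) (size pi) -> delta != [::] -> {in pi, forall z, z \notin delta} ->
  (nth 0 (interleave 0 w delta pi) 0 == nth 0 delta 0) = head false w.
Proof.
rewrite mem_bwords => /andP[/eqP wx /eqP wy] delta_neq0 disj.
case: w wx wy => [|[] w] /= wx wy.
- by move: delta_neq0; rewrite -size_eq0 -wx.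
- by rewrite nth0 eqxx.
case: pi wy disj => // c pi _ disj; apply/negbTE/eqP => /= c_eq.
by have := disj c (mem_head c pi); rewrite c_eq mem_nth // lt0n size_eq0.
Qed.

Lemma nth_last_interleave w delta pi :
  w \in bwords (size delta) (size pi) -> delta != [::] -> {in pi, forall z, z \notin delta} ->
  (nth 0 (interleave 0 w delta pi) (size pi + size delta).-1 == nth 0 delta (size delta).-1)
  = last false w.
Proof.
case/lastP: w => [|w b] w_in delta_neq0 disj.
  by move: w_in; rewrite mem_bwords /= eq_sym size_eq0 (negbTE delta_neq0).
rewrite addnC -(size_mem_bwords w_in) -(size_interleave 0 _ delta pi) !nth_last.
move: w_in; rewrite mem_bwords => /andP[/eqP wx /eqP wy].
rewrite last_interleave ?last_rcons //; last by case: (w).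
case: b wx wy => wx wy; first by rewrite eqxx.
have pi_neq0 : pi != [::] by rewrite -size_eq0 -wy count_rcons addn1.
apply/negbTE/eqP => eq_last; have := disj _ (mem_last_neq0 0 pi_neq0).
by rewrite eq_last mem_last_neq0.
Qed.

Section ShuffleSums.
Variables (pi delta : seq int) (F : seq int -> RF).
Hypotheses (udelta : uniq delta) (upi : uniq pi).
Hypotheses (disj : {in pi, forall z, z \notin delta}) (delta_neq0 : delta != [::]).

Lemma sum_Sh_l :
  \sum_(a <- Sh_l pi delta) F a =
  \sum_(w <- bwords (size delta) (size pi) | head false w) F (interleave 0 w delta pi).
Proof.
rewrite big_filter (perm_big _ (perm_Sh_interleave udelta upi disj)) big_map.
rewrite big_seq_cond [RHS]big_seq_cond; apply: eq_bigl => w.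
by case: (boolP (w \in _)) => //= w_in; rewrite nth0_interleave.
Qed.

Lemma sum_Sh_ls :
  \sum_(a <- Sh_ls pi delta) F a =
  \sum_(w <- bwords (size delta) (size pi) | head false w && last false w)
     F (interleave 0 w delta pi).
Proof.
rewrite big_filter big_filter_cond (perm_big _ (perm_Sh_interleave udelta upi disj)) big_map.
rewrite big_seq_cond [RHS]big_seq_cond; apply: eq_bigl => w.
by case: (boolP (w \in _)) => //= w_in; rewrite nth0_interleave ?nth_last_interleave.
Qed.
End ShuffleSums.

Lemma subseq_cons_notin (T : eqType) (s t : seq T) z :
  z \notin s -> subseq s (z :: t) = subseq s t.
Proof.
case: s => [|b s]; first by case: t.
by rewrite inE negb_or eq_sym /= => /andP[/negbTE-> _].
Qed.

Lemma mem_Sh_ll_cons pi z delta a : z \notin pi ->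
  (z :: a \in Sh_ll pi (z :: delta)) = (a \in Sh_l pi delta).
Proof.
move=> z_notin; rewrite !mem_filter !mem_permutations (subseq_cons_notin _ z_notin).
rewrite (subseq_cat2l [:: z]) [perm_eq (z :: a) _]perm_sym (perm_catCA pi [:: z] delta).
by rewrite perm_sym perm_cons /= eqxx.
Qed.

Lemma perm_Sh_ll pi z delta : z \notin pi ->
  perm_eq (Sh_ll pi (z :: delta)) [seq z :: a | a <- Sh_l pi delta].
Proof.
move=> z_notin; apply: uniq_perm.
- by rewrite !filter_uniq // permutations_uniq.
- by rewrite map_inj_uniq ?filter_uniq ?permutations_uniq // => a b [].
move=> a; apply/idP/mapP => [a_in | [a' a'_in ->]]; last by rewrite mem_Sh_ll_cons.
have: a \in Sh_l pi (z :: delta) by move: a_in; rewrite mem_filter => /andP[].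
rewrite !mem_filter mem_permutations => /andP[/eqP a0 /andP[_ perm_a]].
case: a a0 a_in perm_a => [_ _ | b a /= -> a_in _]; first by move/perm_size; rewrite size_cat addnS.
by exists a; rewrite // -(mem_Sh_ll_cons _ _ z_notin).
Qed.

Lemma sum_des_qwt (s : seq (seq int)) (d : nat) :
  \sum_(a <- s | des a == d) qv ^+ maj a = \sum_(a <- s) qwt d%:Z a.
Proof. by rewrite big_mkcond; apply: eq_bigr => a _; rewrite /qwt eqz_nat. Qed.

Lemma sum_head_shuffle_gf x y d :
  \sum_(w <- bwords (size x) (size y) | head false w) qwt d (interleave 0 w x y) =
  shuffle_gf true x y d + shuffle_gf false x y d.
Proof.
rewrite (bigID (fun w => last false w)) /=.
by congr (_ + _); apply: eq_bigl => w; rewrite ?eqb_id ?eqbF_neg.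
Qed.

Section ShuffleClosedForms.
Variables (pi delta : seq int).
Hypotheses (udelta : uniq delta) (upi : uniq pi) (disj : {in pi, forall z, z \notin delta}).
Hypotheses (delta_neq0 : delta != [::]) (pi_neq0 : pi != [::]) (delta_gt_pi : allrel >%R delta pi).

Lemma Sh_l_closed (d : nat) :
  \sum_(a <- Sh_l pi delta | des a == d) qv ^+ maj a =
  form_l (size delta) (size pi) (des delta) (des pi) (maj delta + maj pi) d.
Proof.
have [gf_ls gf_lp] := shuffle_gf_closed delta_neq0 pi_neq0 delta_gt_pi.
rewrite sum_des_qwt sum_Sh_l // sum_head_shuffle_gf gf_ls gf_lp.
by rewrite form_l_split // des_lt_size.
Qed.

Lemma Sh_ls_closed (d : nat) :
  \sum_(a <- Sh_ls pi delta | des a == d) qv ^+ maj a =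
  form_ls (size delta) (size pi) (des delta) (des pi) (maj delta + maj pi) d.
Proof.
have [gf_ls _] := shuffle_gf_closed delta_neq0 pi_neq0 delta_gt_pi.
rewrite sum_des_qwt sum_Sh_ls // -gf_ls.
by apply: eq_bigl => w; rewrite eqb_id.
Qed.

Lemma Sh_ll_closed z (d : nat) : z \notin pi -> z < head 0 delta ->
  \sum_(a <- Sh_ll pi (z :: delta) | des a == d) qv ^+ maj a =
  qv ^+ d * form_l (size delta) (size pi) (des delta) (des pi) (maj delta + maj pi) d.
Proof.
move=> z_notin z_lt.
rewrite -Sh_l_closed !sum_des_qwt (perm_big _ (perm_Sh_ll _ z_notin)) big_map mulr_sumr.
rewrite big_seq [RHS]big_seq; apply: eq_bigr => a.
rewrite !mem_filter mem_permutations => /andP[/eqP a0 /andP[_ perm_a]].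
have a_neq0 : a != [::].
  by rewrite -size_eq0 (perm_size perm_a) size_cat addn_eq0 !size_eq0 negb_and pi_neq0.
rewrite /qwt des_cons // maj_cons // -nth0 a0 nth0 (lt_gtF z_lt) !add0n eqz_nat.
by case: eqP => [-> | _]; rewrite ?mulr0 // exprD mulrC.
Qed.
End ShuffleClosedForms.

Lemma qvX_form_l m n r s M (d : nat) :
  qv ^+ d * form_l m n r s M d =
  qterm (m.+1%:Z - r%:Z + s%:Z - 1) (d%:Z - r%:Z) (n%:Z - s%:Z + r%:Z - 1) (d%:Z - s%:Z - 1)
        ((M + r)%N%:Z + (d%:Z - s%:Z + 1) * (d%:Z - r%:Z)).
Proof. by rewrite /form_l qvX_qterm; congr qterm; nia. Qed.

End ShuffleStatistics.

Theorem theorem3p5 (pi delta : seq int) (m n r s d : nat) :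
  size delta = m -> size pi = n ->
  uniq delta -> uniq pi ->
  (forall x, x \in pi -> x \notin delta) ->
  des delta = r -> des pi = s ->
  (2 <= m)%N -> (0 < n)%N ->
  (nth 0 delta 0 < nth 0 delta 1)%R ->
  (forall x y, x \in delta -> y \in pi -> (y < x)%R) ->
  [/\ (\sum_(a <- Sh_l pi delta | des a == d) qv ^+ maj a =
         gaussZ (m%:Z - r%:Z + s%:Z) (d%:Z - r%:Z)
       * gaussZ (n%:Z - s%:Z + r%:Z - 1) (d%:Z - s%:Z - 1)
       * qv ^ ((maj delta + maj pi)%:Z + (d%:Z - s%:Z) * (d%:Z - r%:Z)))%R,
      (\sum_(a <- Sh_ls pi delta | des a == d) qv ^+ maj a =
         gaussZ (m%:Z - r%:Z + s%:Z - 1) (d%:Z - r%:Z)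
       * gaussZ (n%:Z - s%:Z + r%:Z - 1) (d%:Z - s%:Z - 1)
       * qv ^ ((maj delta + maj pi)%:Z + (d%:Z - s%:Z) * (d%:Z - r%:Z)))%R &
      (\sum_(a <- Sh_ll pi delta | des a == d) qv ^+ maj a =
         gaussZ (m%:Z - r%:Z + s%:Z - 1) (d%:Z - r%:Z)
       * gaussZ (n%:Z - s%:Z + r%:Z - 1) (d%:Z - s%:Z - 1)
       * qv ^ ((maj delta + maj pi)%:Z + (d%:Z - s%:Z + 1) * (d%:Z - r%:Z)))%R].
Proof.
move=> <- <- udelta upi disj <- <- m_ge2 n_gt0 delta01 delta_gt.
have {delta_gt} delta_gt_pi : allrel >%R delta pi by apply/allrelP.
have pi_neq0 : pi != [::] by rewrite -size_eq0 -lt0n.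
have delta_neq0 : delta != [::] by rewrite -size_eq0 -lt0n ltnW.
split; [exact: Sh_l_closed | exact: Sh_ls_closed | clear delta_neq0].
case: delta udelta disj m_ge2 delta01 delta_gt_pi => [// | z delta] /andP[_ udelta] disj.
rewrite /= nth0 allrel_consl => m_ge2 z_lt /andP[_ delta_gt_pi].
have delta_neq0 : delta != [::] by rewrite -size_eq0 -lt0n.
have z_notin : z \notin pi by apply/negP => /disj; rewrite mem_head.
have {}disj : {in pi, forall x, x \notin delta}.
  by move=> x /disj; rewrite inE negb_or => /andP[].
rewrite Sh_ll_closed // qvX_form_l (des_cons z delta_neq0) (maj_cons z delta_neq0).
by rewrite (lt_gtF z_lt) !add0n /qterm addnAC.
Qed.
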